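(* Let $X,Z$ be complex Banach spaces, $E\in L(X,Z)$, $A\colon\mathrm{dom}(A)\subseteq X\to Z$ closed and densely defined, and assume $(E,A)$ has a complex resolvent index $p_{\mathrm{res}}^{(E,A)}$; set $p:=p_{\mathrm{res}}^{(E,A)}+1$. Fix $\mu\in\rho(E,A)$, let $X_{\ker}:=\ker R_r(\mu)^p$, $Z_{\ker}:=\ker R_l(\mu)^p$, let $A_{\ker}:=A|_{\mathrm{dom}(A)\cap X_{\ker}}\colon \mathrm{dom}(A)\cap X_{\ker}\to Z_{\ker}$ (which has a bounded inverse $A_{\ker}^{-1}\colon Z_{\ker}\to X_{\ker}$) and $E_{\ker}:=E|_{X_{\ker}}\in L(X_{\ker},Z_{\ker})$. Let $f\in C^p([0,\infty);Z_{\ker})$. Then the equation $\frac{\mathrm d}{\mathrm dt}Ex(t)=Ax(t)+f(t)$, $t\in[0,\infty)$, has a classical solution given by $$x(t)=-\sum_{i=0}^pA_{\ker}^{-1}(E_{\ker}A_{\ker}^{-1})^if^{(i)}(t),\quad t\ge0.$$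
   Context: $\rho(E,A)$ is the set of $\lambda\in\mathbb C$ for which $\lambda E-A\colon\mathrm{dom}(A)\to Z$ is bijective with bounded inverse. $(E,A)$ has a complex resolvent index if there is a smallest $p_{\mathrm{res}}^{(E,A)}\in\mathbb N_0$ for which there exist $\omega\in\mathbb R$, $C>0$ with $\{\operatorname{Re}\lambda>\omega\}\subseteq\rho(E,A)$ and $\|(\lambda E-A)^{-1}\|\le C|\lambda|^{p_{\mathrm{res}}^{(E,A)}-1}$ for $\operatorname{Re}\lambda>\omega$. $R_r(\lambda):=(\lambda E-A)^{-1}E$, $R_l(\lambda):=E(\lambda E-A)^{-1}$. A classical solution of $\frac{\mathrm d}{\mathrm dt}Ex=Ax+f$ on $[0,\infty)$ is a function $x\in C([0,\infty);X)$ with $Ex\in C^1([0,\infty);Z)$, $x(t)\in\mathrm{dom}(A)$ for all $t\ge0$, satisfying the equation for all $t\ge0$. *)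

From HB Require Import structures.
From mathcomp Require Import all_boot all_order all_algebra.
From mathcomp Require Import all_classical all_reals all_analysis.
From mathcomp.real_closed Require complex.
Import complex.ComplexField.
Import Order.TTheory GRing.Theory Num.Theory.
Import numFieldNormedType.Exports.

Set Implicit Arguments.
Unset Strict Implicit.
Unset Printing Implicit Defensive.

Local Open Scope ring_scope.
Local Open Scope classical_set_scope.

Section Defs.
Variable R : realType.
Local Notation C := (complex.complex R).

Section OneSpace.
Variable V : normedModType C.

(** g : R -> V has right/two-sided derivative dg on [0, oo): at t = 0 the
    one-sided (right) derivative, at t > 0 the usual derivative, the
    difference quotient being scaled by the real number h^-1 seen in C. *)
Definition has_deriv_nonneg (g dg : R -> V) :=
  forall t : R, 0 <= t ->
    (fun h : R => (complex.real_complex R h)^-1 *: (g (t + h) - g t))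
      @ within [set h : R | h != 0 /\ 0 <= t + h] (nbhs (0 : R)) --> dg t.
End OneSpace.

Section TwoSpaces.
Variables X Z : normedModType C.

Definition lin_subspace (D : set X) :=
  D 0 /\ forall (a : C) x y, D x -> D y -> D (a *: x + y).

Definition linear_on (D : set X) (A : X -> Z) :=
  forall (a : C) x y, D x -> D y -> A (a *: x + y) = a *: A x + A y.

Definition closed_op (D : set X) (A : X -> Z) :=
  forall (u : nat -> X) (x : X) (y : Z),
    (forall n, D (u n)) -> u @ \oo --> x -> (A \o u) @ \oo --> y ->
    D x /\ A x = y.

Definition densely_defined (D : set X) := closure D = setT.

Definition is_resolvent (E : X -> Z) (D : set X) (A : X -> Z) (l : C)
    (Rl : Z -> X) :=
  [/\ forall z, D (Rl z) /\ l *: E (Rl z) - A (Rl z) = z,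
      forall x, D x -> Rl (l *: E x - A x) = x &
      exists M : C, forall z, `|Rl z| <= M * `|z| ].

Definition resolvent_set (E : X -> Z) (D : set X) (A : X -> Z) : set C :=
  [set l | exists Rl, is_resolvent E D A l Rl].

Definition resolvent_growth (E : X -> Z) (D : set X) (A : X -> Z) (p : nat) :=
  exists (w : R) (K : C), 0 < K /\
    forall l : C, w < complex.Re l ->
      exists Rl, is_resolvent E D A l Rl /\
        forall z, `|Rl z| <= K * `|l| ^ (p%:Z - 1) * `|z|.

Definition has_resolvent_index (E : X -> Z) (D : set X) (A : X -> Z)
    (pres : nat) :=
  resolvent_growth E D A pres /\
  forall q, resolvent_growth E D A q -> (pres <= q)%N.

(** kernels of R_r(mu)^p = ((mu E - A)^-1 E)^p and R_l(mu)^p = (E (mu E - A)^-1)^p *)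
Definition Xker (E : X -> Z) (Rmu : Z -> X) (p : nat) : set X :=
  [set x | iter p (Rmu \o E) x = 0].
Definition Zker (E : X -> Z) (Rmu : Z -> X) (p : nat) : set Z :=
  [set z | iter p (E \o Rmu) z = 0].

Definition classical_solution (E : X -> Z) (D : set X) (A : X -> Z)
    (f : R -> Z) (x : R -> X) :=
  {within `[0, +oo[, continuous x} /\
  exists dEx : R -> Z,
    [/\ has_deriv_nonneg (E \o x) dEx,
        {within `[0, +oo[, continuous dEx} &
        forall t : R, 0 <= t -> D (x t) /\ dEx t = A (x t) + f t].
End TwoSpaces.
End Defs.

From HB Require Import structures.
From mathcomp Require Import all_boot all_order all_algebra.
From mathcomp Require Import all_classical all_reals all_analysis.
From mathcomp.real_closed Require complex.
Import complex.ComplexField.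
Import Order.TTheory GRing.Theory Num.Theory.
Import numFieldNormedType.Exports.
Local Open Scope ring_scope.
Local Open Scope classical_set_scope.
Set Implicit Arguments.
Unset Strict Implicit.
Unset Printing Implicit Defensive.

(* The inverse of A on the kernel parts is R(mu) N, where
   N = - sum_(k < p) mu^k R_l(mu)^k is a truncated Neumann series: A R(mu) = mu R_l(mu) - 1,
   and N inverts mu R_l(mu) - 1 telescopically because R_l(mu)^p vanishes on Z_ker.
   Hence T = E A_ker^-1 = R_l(mu) N is nilpotent on Z_ker, the last term of E x drops out,
   E x = - sum_(i < p) T^(i+1) f^(i), and differentiating termwise gives
   (E x)' = - sum_(i < p) T^(i+1) f^(i+1) = A x + f, since A x = - sum_(i <= p) T^i f^(i). *)

Lemma iter_intertwine (T U : Type) (f : T -> T) (g : T -> U) (h : U -> U) :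
  (forall x, g (f x) = h (g x)) -> forall n x, g (iter n f x) = iter n h (g x).
Proof. by move=> gfh; elim=> [|n IH] x //=; rewrite gfh IH. Qed.

Lemma iter_comp_commute (T : Type) (f g : T -> T) :
  (forall x, f (g x) = g (f x)) -> forall n x, iter n (f \o g) x = iter n f (iter n g x).
Proof.
move=> fg; elim=> [|n IH] x //=.
by rewrite IH (iter_intertwine (fun y => esym (fg y))).
Qed.

Lemma continuous_iter (T : topologicalType) (f : T -> T) n :
  continuous f -> continuous (iter n f).
Proof.
move=> fc; elim: n => [|n IH] x /=; first exact: cvg_id.
exact: continuous_comp (IH x) (fc _).
Qed.

Section IterLinear.
Variables (K : pzRingType) (U : lmodType K) (f : {linear U -> U}) (n : nat).

Lemma iter_is_linear : linear (iter n f).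
Proof. by elim: n => [|m IH] a x y //=; rewrite IH linearP. Qed.

HB.instance Definition _ := GRing.isLinear.Build K U U *:%R (iter n f) iter_is_linear.

Lemma iter_eq0_scale_subr v a : iter n f v = 0 -> iter n f (a *: f v - v) = 0.
Proof. by move=> fv0; rewrite linearB linearZ /= -iterSr iterS fv0 !linear0 scaler0 addr0. Qed.
End IterLinear.

Section Neumann.
Variables (K : comPzRingType) (V : lmodType K) (f : {linear V -> V}) (mu : K) (n : nat).

Definition neumann (v : V) : V := - \sum_(k < n) mu ^+ k *: iter k f v.

Lemma neumann_is_linear : linear neumann.
Proof.
move=> a x y; rewrite /neumann scalerN -opprD scaler_sumr -big_split /=.
by congr (- _); apply: eq_bigr => k _; rewrite linearP scalerDr !scalerA mulrC.
Qed.

HB.instance Definition _ := GRing.isLinear.Build K V V *:%R neumann neumann_is_linear.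

Lemma neumann_telescope v : neumann (mu *: f v - v) = v - mu ^+ n *: iter n f v.
Proof.
have step k : mu ^+ k *: iter k f (mu *: f v - v)
    = mu ^+ k.+1 *: iter k.+1 f v - mu ^+ k *: iter k f v.
  by rewrite linearB linearZ /= -iterSr scalerBr scalerA -exprSr.
rewrite /neumann; under eq_bigr do rewrite step.
rewrite -(big_mkord xpredT (fun k => mu ^+ k.+1 *: iter k.+1 f v - mu ^+ k *: iter k f v)).
by rewrite telescope_sumr // expr0 scale1r opprB.
Qed.

Lemma neumann_scale_subrK v : iter n f v = 0 -> neumann (mu *: f v - v) = v.
Proof. by move=> fn0; rewrite neumann_telescope fn0 scaler0 subr0. Qed.
End Neumann.

Lemma neumann_intertwine (K : comPzRingType) (V W : lmodType K)
    (f : {linear V -> V}) (g : {linear V -> W}) (h : {linear W -> W}) mu n :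
  (forall v, g (f v) = h (g v)) ->
  forall v, g (neumann f mu n v) = neumann h mu n (g v).
Proof.
move=> gfh v; rewrite /neumann linearN linear_sum; congr (- _).
by apply: eq_bigr => k _; rewrite linearZ /= (iter_intertwine gfh).
Qed.

Lemma neumann_continuous (K : numFieldType) (V : normedModType K)
    (f : {linear V -> V}) mu n :
  continuous f -> continuous (neumann f mu n).
Proof.
move=> fc v; apply: continuousN; apply: (continuous_big add_continuous) => k _.
by move=> w; apply: continuousZr; exact: continuous_iter.
Qed.

Section LinearBounds.
Variables (K : numFieldType) (V W : normedModType K) (f : {linear V -> W}).

Lemma continuous_linear_norm_le :
  continuous f -> exists M : K, forall x, `|f x| <= M * `|x|.
Proof.
move=> /linear_bounded_continuous /linear_boundedP [M [Mreal fM]].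
by exists (`|M| + 1); apply: fM; rewrite (le_lt_trans (real_ler_norm Mreal)) // ltrDl.
Qed.

Lemma norm_le_linear_continuous :
  (exists M : K, forall x, `|f x| <= M * `|x|) -> continuous f.
Proof.
move=> [M fM]; apply/linear_bounded_continuous/linear_boundedP.
near=> r => x; apply: le_trans (fM x) _.
have Mx0 : 0 <= M * `|x| := le_trans (normr_ge0 _) (fM x).
by rewrite -(ger0_norm Mx0) normrM normr_id ler_wpM2r.
Unshelve. all: by end_near. Qed.
End LinearBounds.

Section DerivNonneg.
Variable R : realType.
Local Notation C := (complex.complex R).
Local Notation window t := (within [set h : R | h != 0 /\ 0 <= t + h] (nbhs (0 : R))).

Definition diffq (V : normedModType C) (g : R -> V) (t h : R) : V :=
  (complex.real_complex R h)^-1 *: (g (t + h) - g t).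

Lemma has_deriv_nonnegP (V : normedModType C) (g dg : R -> V) :
  has_deriv_nonneg g dg <-> forall t, 0 <= t -> diffq g t @ window t --> dg t.
Proof. by []. Qed.

Lemma window_at_right t : 0 <= t -> (0 : R)^'+ `=>` window t.
Proof.
move=> t0; apply: within_subset => h /= h0.
by rewrite gt_eqF // addr_ge0 // ltW.
Qed.

Lemma has_deriv_nonneg_unique (V : normedModType C) (g dg1 dg2 : R -> V) :
  has_deriv_nonneg g dg1 -> has_deriv_nonneg g dg2 ->
  forall t, 0 <= t -> dg1 t = dg2 t.
Proof.
move=> /has_deriv_nonnegP g1 /has_deriv_nonnegP g2 t t0.
apply: (@cvg_unique _ (@norm_hausdorff _ V) (diffq g t @ (0 : R)^'+)).
- exact: cvg_trans (cvg_app _ (window_at_right t0)) (g1 t t0).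
- exact: cvg_trans (cvg_app _ (window_at_right t0)) (g2 t t0).
Qed.

Lemma has_deriv_nonneg_cst (V : normedModType C) (c : V) :
  has_deriv_nonneg (fun=> c) (fun=> 0).
Proof.
apply/has_deriv_nonnegP => t _; rewrite /diffq subrr.
under eq_fun do rewrite scaler0; exact: cvg_cst.
Qed.

Lemma has_deriv_nonneg_eq (V : normedModType C) (g1 g2 dg : R -> V) :
  (forall t, 0 <= t -> g1 t = g2 t) ->
  has_deriv_nonneg g1 dg -> has_deriv_nonneg g2 dg.
Proof.
move=> g12 /has_deriv_nonnegP g1dg; apply/has_deriv_nonnegP => t t0.
apply: cvg_trans (g1dg t t0); apply: near_eq_cvg.
by apply: filterS (withinT _ _) => h [_ th]; rewrite /diffq !g12.
Qed.

Lemma has_deriv_nonneg_linear (V W : normedModType C) (L : {linear V -> W})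
    (g dg : R -> V) :
  continuous L -> has_deriv_nonneg g dg -> has_deriv_nonneg (L \o g) (L \o dg).
Proof.
move=> Lc /has_deriv_nonnegP gdg; apply/has_deriv_nonnegP => t t0.
have -> : diffq (L \o g) t = L \o diffq g t.
  by apply/funext => h; rewrite /comp /diffq -linearB linearZ.
exact: cvg_comp (gdg t t0) (Lc _).
Qed.

Lemma has_deriv_nonneg_opp (V : normedModType C) (g dg : R -> V) :
  has_deriv_nonneg g dg -> has_deriv_nonneg (fun t => - g t) (fun t => - dg t).
Proof.
move=> /has_deriv_nonnegP gdg; apply/has_deriv_nonnegP => t t0.
have -> : diffq (fun t => - g t) t = fun h => - diffq g t h.
  by apply/funext => h; rewrite /diffq -opprD scalerN.
exact: cvgN (gdg t t0).
Qed.

Lemma has_deriv_nonneg_sum (V : normedModType C) (I : Type) (r : seq I)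
    (g dg : I -> R -> V) :
  (forall i, has_deriv_nonneg (g i) (dg i)) ->
  has_deriv_nonneg (fun t => \sum_(i <- r) g i t) (fun t => \sum_(i <- r) dg i t).
Proof.
move=> gdg; apply/has_deriv_nonnegP => t t0.
have -> : diffq (fun t => \sum_(i <- r) g i t) t = fun h => \sum_(i <- r) diffq (g i) t h.
  by apply/funext => h; rewrite /diffq -sumrB scaler_sumr.
by apply: cvg_big => // [|i _]; [exact: add_continuous | exact: gdg].
Qed.

Lemma has_deriv_nonneg_ker (V W : normedModType C) (P : {linear V -> W})
    (g dg : R -> V) :
  continuous P -> has_deriv_nonneg g dg -> (forall t, 0 <= t -> P (g t) = 0) ->
  forall t, 0 <= t -> P (dg t) = 0.
Proof.
move=> Pc gdg Pg0.
have Pg_cst : has_deriv_nonneg (P \o g) (fun=> 0).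
  by apply: has_deriv_nonneg_eq (has_deriv_nonneg_cst 0) => t t0; rewrite /= Pg0.
exact: has_deriv_nonneg_unique (has_deriv_nonneg_linear Pc gdg) Pg_cst.
Qed.
End DerivNonneg.

Lemma is_resolvent_linear (R : realType) (X Z : normedModType (complex.complex R))
    (E : {linear X -> Z}) (D : set X) (A : X -> Z) mu (Rmu : Z -> X) :
  lin_subspace D -> linear_on D A -> is_resolvent E D A mu Rmu -> linear Rmu.
Proof.
move=> [_ Dlin] Alin [Rright Rleft _] a z1 z2.
have Dz : D (a *: Rmu z1 + Rmu z2).
  by apply: Dlin; [exact: (Rright z1).1 | exact: (Rright z2).1].
rewrite -[RHS](Rleft _ Dz); congr Rmu.
rewrite linearP Alin; [|exact: (Rright z1).1|exact: (Rright z2).1].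
rewrite -[in LHS](Rright z1).2 -[in LHS](Rright z2).2 scalerBr scalerDr !scalerA [a * mu]mulrC.
by rewrite opprD addrACA.
Qed.

Section Resolvent.
Variable R : realType.
Local Notation C := (complex.complex R).
Variables (X Z : normedModType C) (E : {linear X -> Z}) (D : set X) (A : X -> Z)
  (mu : C) (Rmu : {linear Z -> X}).
Hypothesis HR : is_resolvent E D A mu Rmu.

Local Notation Rl := (E \o Rmu).
Local Notation Rr := (Rmu \o E).

Lemma resolvent_dom z : D (Rmu z).
Proof. by case: HR => /(_ z) []. Qed.

Lemma A_resolvent z : A (Rmu z) = mu *: E (Rmu z) - z.
Proof.
case: HR => /(_ z) [_ Rz] _ _.
by rewrite -[LHS](subKr (mu *: E (Rmu z))) Rz.
Qed.

Lemma resolvent_A x : D x -> Rmu (A x) = mu *: Rmu (E x) - x.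
Proof.
move=> Dx; case: HR => _ /(_ x Dx) + _; rewrite linearB linearZ => Rx.
by rewrite -[LHS](subKr (mu *: Rmu (E x))) Rx.
Qed.

Lemma resolvent_eq0 z : Rmu z = 0 -> z = 0.
Proof.
case: HR => Rright _ _ Rz0.
have [_ <-] := Rright z; have [_ R0] := Rright 0.
by rewrite linear0 in R0; rewrite Rz0.
Qed.

Lemma resolvent_continuous : continuous Rmu.
Proof. by apply: norm_le_linear_continuous; case: HR. Qed.

Lemma resolvent_iter n z : Rmu (iter n Rl z) = iter n Rr (Rmu z).
Proof. exact: iter_intertwine. Qed.

Variable p : nat.
Local Notation N := (neumann Rl mu p).
Local Notation Zk := (Zker E Rmu p).

Definition Aker_inv : {linear Z -> X} := Rmu \o N.
Arguments Aker_inv : simpl never.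

Lemma iter_Rl_neumann n z : iter n Rl (N z) = N (iter n Rl z).
Proof.
exact: (@neumann_intertwine _ _ _ Rl (iter n Rl) Rl mu p (fun v => esym (iterSr n _ v))).
Qed.

Lemma Rl_neumann z : E (Rmu (N z)) = N (E (Rmu z)).
Proof. exact: iter_Rl_neumann 1 z. Qed.

Lemma Aker_inv_dom z : D (Aker_inv z).
Proof. exact: resolvent_dom. Qed.

Lemma Xker_Aker_inv z : Zk z -> Xker E Rmu p (Aker_inv z).
Proof.
move=> Zz; change (iter p Rr (Rmu (N z)) = 0).
by rewrite -resolvent_iter iter_Rl_neumann Zz !linear0.
Qed.

Lemma A_Aker_inv z : Zk z -> A (Aker_inv z) = z.
Proof.
move=> Zz; change (A (Rmu (N z)) = z).
rewrite A_resolvent Rl_neumann -linearZ -linearB.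
exact: neumann_scale_subrK.
Qed.

Lemma Aker_inv_A x : D x -> Xker E Rmu p x -> Aker_inv (A x) = x.
Proof.
move=> Dx Xx; change (Rmu (N (A x)) = x).
rewrite (@neumann_intertwine _ _ _ Rl Rmu Rr mu p (fun=> erefl)) resolvent_A //.
exact: neumann_scale_subrK.
Qed.

Lemma Zker_A x : D x -> Xker E Rmu p x -> Zk (A x).
Proof.
move=> Dx Xx; apply: resolvent_eq0.
rewrite resolvent_iter resolvent_A //; exact: iter_eq0_scale_subr.
Qed.

Lemma Zker_E_Aker_inv z : Zk z -> Zk (E (Aker_inv z)).
Proof.
move=> Zz; change (iter p Rl (Rl (N z)) = 0).
by rewrite -iterSr iterS iter_Rl_neumann Zz !linear0.
Qed.

Lemma Aker_inv_nilpotent z : Zk z -> iter p (E \o Aker_inv) z = 0.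
Proof.
move=> Zz; change (iter p (Rl \o N) z = 0).
rewrite (@eq_iter _ (Rl \o N) (N \o Rl) Rl_neumann).
by rewrite (iter_comp_commute (fun v => esym (Rl_neumann v))) Zz linear0.
Qed.

Hypothesis Econt : continuous E.

Lemma Rl_continuous : continuous Rl.
Proof. by move=> z; exact: continuous_comp (@resolvent_continuous z) (@Econt _). Qed.

Lemma Aker_inv_continuous : continuous Aker_inv.
Proof.
move=> z; apply: continuous_comp (@resolvent_continuous _).
exact: neumann_continuous Rl_continuous z.
Qed.

Variables (f : R -> Z) (fs : nat -> R -> Z).
Hypotheses (fs0 : fs 0%N = f)
  (fs_deriv : forall i, (i < p)%N -> has_deriv_nonneg (fs i) (fs i.+1))
  (fs_cont : forall i, (i <= p)%N -> {within `[0, +oo[, continuous (fs i)})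
  (f_Zker : forall t, 0 <= t -> Zk (f t)).

Local Notation T := (E \o Aker_inv).

Lemma Zker_fs i t : (i <= p)%N -> 0 <= t -> Zk (fs i t).
Proof.
elim: i t => [|i IH] t ip t0; first by rewrite fs0; exact: f_Zker.
apply: (has_deriv_nonneg_ker (P := iter p Rl)) t0.
- exact: continuous_iter Rl_continuous.
- exact: fs_deriv.
- by move=> s s0; apply: IH => //; exact: ltnW.
Qed.

Lemma Zker_iter_fs n i t : (i <= p)%N -> 0 <= t -> Zk (iter n T (fs i t)).
Proof.
move=> ip t0; elim: n => [|n IH]; first exact: Zker_fs.
exact: Zker_E_Aker_inv.
Qed.

Definition ker_solution t : X := - \sum_(i < p.+1) Aker_inv (iter i T (fs i t)).

Lemma E_ker_solution t :
  0 <= t -> E (ker_solution t) = - \sum_(i < p) iter i.+1 T (fs i t).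
Proof.
move=> t0; have Tp0 : E (Aker_inv (iter p T (fs p t))) = 0.
  by rewrite Aker_inv_nilpotent ?raddf0 //; exact: Zker_fs.
by rewrite linearN linear_sum big_ord_recr /= Tp0 addr0.
Qed.

Lemma A_ker_solution t : 0 <= t ->
  D (ker_solution t) /\ A (ker_solution t) = - \sum_(i < p.+1) iter i T (fs i t).
Proof.
move=> t0; have -> : ker_solution t = Aker_inv (- \sum_(i < p.+1) iter i T (fs i t)).
  by rewrite linearN linear_sum.
split; first exact: Aker_inv_dom.
rewrite A_Aker_inv // /Zker /= linearN linear_sum big1 ?oppr0 // => i _.
exact: Zker_iter_fs (ltn_ord i) t0.
Qed.

Lemma ker_solution_classical : classical_solution E D A f ker_solution.
Proof.
have Tc n : continuous (iter n T).
  by apply: continuous_iter => z; exact: continuous_comp (@Aker_inv_continuous z) (@Econt _).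
split.
  move=> t; apply: continuousN; apply: (continuous_big add_continuous) => i _ s.
  have AT : continuous (Aker_inv \o iter i T).
    by move=> z; exact: continuous_comp (@Tc i z) (@Aker_inv_continuous _).
  exact: (continuous_comp (@fs_cont i (ltn_ord i) s) (@AT _)).
exists (fun t => - \sum_(i < p) iter i.+1 T (fs i.+1 t)); split.
- apply: (@has_deriv_nonneg_eq _ _ (fun t => - \sum_(i < p) iter i.+1 T (fs i t))).
    by move=> t t0; rewrite /= E_ker_solution.
  apply: has_deriv_nonneg_opp; apply: has_deriv_nonneg_sum => i.
  exact: has_deriv_nonneg_linear (Tc i.+1) (@fs_deriv i (ltn_ord i)).
- move=> t; apply: continuousN; apply: (continuous_big add_continuous) => i _ s.
  exact: (continuous_comp (@fs_cont i.+1 (ltn_ord i) s) (@Tc i.+1 _)).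
move=> t t0; have [Dx ->] := A_ker_solution t0; split => //.
by rewrite big_ord_recl /= fs0 opprD addrAC addNr add0r.
Qed.
End Resolvent.

Theorem proposition3p3 (R : realType)
  (X Z : completeNormedModType (complex.complex R))
  (E : {linear X -> Z}) (D : set X) (A : X -> Z) (pres : nat)
  (mu : complex.complex R) (Rmu : Z -> X)
  (f : R -> Z) (fs : nat -> R -> Z) :
  continuous E ->
  lin_subspace D -> linear_on D A -> closed_op D A -> densely_defined D ->
  has_resolvent_index E D A pres ->
  is_resolvent E D A mu Rmu ->
  (* f in C^p([0,oo); Z_ker), p = pres + 1, with derivatives fs i *)
  fs 0%N = f ->
  (forall i : nat, (i < pres.+1)%N -> has_deriv_nonneg (fs i) (fs i.+1)) ->
  (forall i : nat, (i <= pres.+1)%N -> {within `[0, +oo[, continuous (fs i)}) ->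
  (forall t : R, 0 <= t -> Zker E Rmu pres.+1 (f t)) ->
  exists Ainv : Z -> X,
    [/\ (forall z, Zker E Rmu pres.+1 z ->
           [/\ D (Ainv z), Xker E Rmu pres.+1 (Ainv z) & A (Ainv z) = z]),
        (forall x, D x -> Xker E Rmu pres.+1 x ->
           Zker E Rmu pres.+1 (A x) /\ Ainv (A x) = x),
        (exists M : complex.complex R,
           forall z, Zker E Rmu pres.+1 z -> `|Ainv z| <= M * `|z|) &
        classical_solution E D A f
          (fun t => - \sum_(i < pres.+2) Ainv (iter i (E \o Ainv) (fs i t)))].
Proof.
(* Closedness, density and the resolvent index are not needed: on Z_ker = ker R_l(mu)^p the
   nilpotency used above holds by definition. *)
move=> Econt HD HA _ _ _ HR fs0 fs_deriv fs_cont f_Zker.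
pose Rlin : {linear Z -> X} :=
  HB.pack Rmu (GRing.isLinear.Build _ _ _ _ Rmu (is_resolvent_linear HD HA HR)).
have HRlin : is_resolvent E D A mu Rlin := HR.
exists (Aker_inv E mu Rlin pres.+1); split.
- move=> z Zz; split; first exact: (Aker_inv_dom HRlin pres.+1 z).
    exact: (Xker_Aker_inv mu (Rmu := Rlin) Zz).
  exact: (A_Aker_inv HRlin Zz).
- by move=> x Dx Xx; split; [exact: (Zker_A HRlin Dx Xx) | exact: (Aker_inv_A HRlin Dx Xx)].
- have [M AM] := continuous_linear_norm_le (Aker_inv_continuous HRlin (p := pres.+1) Econt).
  by exists M => z _.
- exact: (ker_solution_classical HRlin Econt fs0 fs_deriv fs_cont f_Zker).
Qed.
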